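(* Let $n$ be a positive integer and let $\xi>2$ be an integer. If $C_{\xi}(n)\neq\emptyset$, then $\xi\le \log_2(n+1)+1$.
   Context: A partition of $n$ is identified with a point $x=(x_1,\dots,x_n)\in\mathbb{Z}_{\ge 0}^n$ satisfying $x_1+2x_2+\dots+nx_n=n$, where $x_i$ is the number of parts equal to $i$. Let $P(n)$ be the set of partitions of $n$ and $P_n=\mathrm{conv}\,P(n)\subset\mathbb{R}^n$, with vertex set $\mathrm{Vert}\,P_n$. For $x\in P(n)\setminus \mathrm{Vert}\,P_n$, let $\xi(x)$ be the minimal number $k$ such that $x=\sum_{j=1}^k\lambda_j y^j$ with $y^1,\dots,y^k\in P(n)$ all different from $x$, $\lambda_j>0$, $\sum_j\lambda_j=1$. For an integer $\xi\ge 2$, $C_\xi(n)$ denotes the set of partitions $x\in P(n)\setminus\mathrm{Vert}\,P_n$ with $\xi(x)=\xi$. *)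

From mathcomp Require Import all_boot all_order all_algebra.
From mathcomp Require Import reals exp.
Set Implicit Arguments. Unset Strict Implicit. Unset Printing Implicit Defensive.
Import Order.TTheory GRing.Theory Num.Theory.
Local Open Scope ring_scope.

(* A partition of n is a point x in Z_{>=0}^n, coordinate i : 'I_n standing
   for the part size i+1, with x_1 + 2 x_2 + ... + n x_n = n. *)
Definition is_partition (n : nat) (x : 'I_n -> nat) : Prop :=
  (\sum_(i < n) (i.+1 * x i))%N = n.

Definition ptR {R : realType} (n : nat) (x : 'I_n -> nat) : 'I_n -> R :=
  fun i => (x i)%:R.

Definition in_Pn {R : realType} (n : nat) (p : 'I_n -> R) : Prop :=
  exists (k : nat) (y : 'I_k -> 'I_n -> nat) (lam : 'I_k -> R),
    (forall j, is_partition (y j)) /\ (forall j, 0 <= lam j) /\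
    \sum_(j < k) lam j = 1 /\
    (forall i, p i = \sum_(j < k) lam j * ptR (y j) i).

Definition is_vertex {R : realType} (n : nat) (x : 'I_n -> nat) : Prop :=
  in_Pn (ptR (R := R) x) /\
  forall (p q : 'I_n -> R) (t : R), in_Pn p -> in_Pn q -> 0 < t < 1 ->
    (forall i, ptR x i = t * p i + (1 - t) * q i) -> p = q.

Definition conv_rep {R : realType} (n k : nat) (x : 'I_n -> nat) : Prop :=
  exists (y : 'I_k -> 'I_n -> nat) (lam : 'I_k -> R),
    (forall j, is_partition (y j)) /\ (forall j, y j <> x) /\
    (forall j, 0 < lam j) /\ \sum_(j < k) lam j = 1 /\
    (forall i, ptR x i = \sum_(j < k) lam j * ptR (y j) i).

Definition xi_eq {R : realType} (n : nat) (x : 'I_n -> nat) (k : nat) : Prop :=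
  conv_rep (R := R) k x /\ forall m, (m < k)%N -> ~ conv_rep (R := R) m x.

Definition C_xi {R : realType} (n xi : nat) (x : 'I_n -> nat) : Prop :=
  is_partition x /\ ~ is_vertex (R := R) x /\ xi_eq (R := R) x xi.

From mathcomp Require Import all_boot all_order all_algebra.
From mathcomp Require Import reals exp.
From mathcomp Require Import ring zify.
(* Caratheodory: the partitions y_j representing x vanish outside the support
   T of x, so more than |T| + 1 of them are affinely dependent and one of them
   can be dropped; hence xi <= |T| + 1.  If two distinct subsets S, S' of T
   had the same sum of part sizes, x would be the midpoint of the partitions
   x - 1_S + 1_S' and x - 1_S' + 1_S, i.e. xi = 2.  So for xi > 2 the 2^|T|
   subset sums are distinct numbers in [0, n], whence
   2^(xi - 1) <= 2^|T| <= n + 1. *)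

Set Implicit Arguments. Unset Strict Implicit. Unset Printing Implicit Defensive.
Import Order.TTheory GRing.Theory Num.Theory.
Local Open Scope ring_scope.

Lemma exists_affine_dependence {F : fieldType} k n (T : {set 'I_n})
    (p : 'I_k -> 'I_n -> F) :
  (forall j i, i \notin T -> p j i = 0) -> (#|T|.+1 < k)%N ->
  exists u : 'I_k -> F, [/\ exists j, u j != 0, \sum_j u j = 0
                           & forall i, \sum_j u j * p j i = 0].
Proof.
move=> p_supp ltTk.
pose A : 'M[F]_(k, 1 + #|T|) :=
  row_mx (const_mx 1) (\matrix_(j, c) p j (enum_val c)).
have /rowV0Pn[v /sub_kermxP vA v_neq0] : kermx A != 0.
  rewrite kermx_eq0 /row_free neq_ltn.
  by rewrite (leq_ltn_trans (rank_leq_col A)).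
move: vA; rewrite mul_mx_row; move/eqP; rewrite row_mx_eq0.
case/andP=> /eqP/matrixP/(_ 0 0) v1 /eqP/matrixP vp.
exists (v 0); split.
- apply/existsP; apply: contraNT v_neq0; rewrite negb_exists => /forallP v0.
  by apply/eqP/rowP => j; rewrite mxE; apply/eqP/negPn.
- by move: v1; rewrite !mxE; under eq_bigr do rewrite mxE mulr1.
- move=> i; have [iT | iNT] := boolP (i \in T).
    move: (vp 0 (enum_rank_in iT i)); rewrite !mxE.
    by under eq_bigr do rewrite mxE (enum_rankK_in iT iT).
  by apply: big1 => j _; rewrite p_supp ?mulr0.
Qed.

Definition supp {n} (x : 'I_n -> nat) : {set 'I_n} := [set i | 0 < x i]%N.

Section ConvexRepresentations.
Variables (R : realType) (n : nat) (x : 'I_n -> nat).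

Lemma conv_rep_nonneg k (y : 'I_k -> 'I_n -> nat) (lam : 'I_k -> R) :
  (forall j, is_partition (y j)) -> (forall j, y j <> x) ->
  (forall j, 0 <= lam j) -> \sum_j lam j = 1 ->
  (forall i, ptR x i = \sum_j lam j * ptR (y j) i) ->
  conv_rep (R := R) #|[set j | 0 < lam j]| x.
Proof.
move=> y_part y_neq lam_ge0 lam_sum x_eq.
set J := [set j | 0 < lam j].
have sum_over_J (f : 'I_k -> R) : (forall j, lam j = 0 -> f j = 0) ->
    \sum_j f j = \sum_(c < #|J|) f (enum_val c).
  move=> f0; rewrite (bigID (mem J)) /= [X in _ + X]big1 ?addr0.
    by rewrite (big_enum_val (A := mem J)).
  move=> j; rewrite inE => /negbTE jNJ; apply: f0.
  by apply/eqP; rewrite eq_le lam_ge0 andbT leNgt jNJ.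
exists (y \o enum_val), (lam \o enum_val); do !split.
- by move=> c; apply: y_part.
- by move=> c; apply: y_neq.
- by move=> c; have := enum_valP c; rewrite inE.
- by rewrite -lam_sum sum_over_J.
- by move=> i; rewrite x_eq sum_over_J // => j ->; rewrite mul0r.
Qed.

Lemma conv_rep_shorten k (y : 'I_k -> 'I_n -> nat) (lam u : 'I_k -> R) :
  (forall j, is_partition (y j)) -> (forall j, y j <> x) ->
  (forall j, 0 < lam j) -> \sum_j lam j = 1 ->
  (forall i, ptR x i = \sum_j lam j * ptR (y j) i) ->
  (exists j, u j != 0) -> \sum_j u j = 0 ->
  (forall i, \sum_j u j * ptR (y j) i = 0) ->
  exists2 m, (m < k)%N & conv_rep (R := R) m x.
Proof.
move=> y_part y_neq lam_gt0 lam_sum x_eq [j1 uj1] u_sum u_rep.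
have [j0 uj0] : exists j0, 0 < u j0.
  apply/existsP; apply: contraNT uj1; rewrite negb_exists => /forallP u_le0.
  have Nu_ge0 j : 0 <= - u j by rewrite oppr_ge0 leNgt u_le0.
  have Nu_sum : \sum_j - u j = 0 by rewrite sumrN u_sum oppr0.
  by have /eqP := psumr_eq0P (fun j _ => Nu_ge0 j) Nu_sum (i := j1) isT; rewrite oppr_eq0.
(* the largest step t along -u keeping all weights nonnegative kills the weight of jm *)
have [jm ujm t_min] := arg_minP (P := fun j => 0 < u j) (fun j => lam j / u j) uj0.
set t := lam jm / u jm.
pose lam' j := lam j - t * u j.
have lam'_ge0 j : 0 <= lam' j.
  rewrite subr_ge0; have [uj_gt0 | uj_le0] := ltP 0 (u j).
    by rewrite -ler_pdivlMr // t_min.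
  by apply: le_trans (ltW (lam_gt0 j)); rewrite mulr_ge0_le0 // divr_ge0 // ltW.
have lam'_jm : lam' jm = 0 by rewrite /lam' /t divfK ?subrr // gt_eqF.
have lam'_sum : \sum_j lam' j = 1 by rewrite sumrB -mulr_sumr u_sum mulr0 subr0.
have x_eq' i : ptR x i = \sum_j lam' j * ptR (y j) i.
  rewrite x_eq; under [RHS]eq_bigr do rewrite mulrBl -mulrA.
  by rewrite sumrB -mulr_sumr u_rep mulr0 subr0.
exists #|[set j | 0 < lam' j]|; last exact: conv_rep_nonneg.
apply: (@leq_ltn_trans #|[set~ jm]|).
  apply/subset_leq_card/subsetP => j; rewrite !inE.
  by apply: contraTneq => ->; rewrite lam'_jm ltxx.
by rewrite cardsC1 card_ord ltn_predL (leq_ltn_trans _ (ltn_ord jm)).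
Qed.

Lemma conv_rep_supp k (y : 'I_k -> 'I_n -> nat) (lam : 'I_k -> R) :
  (forall j, 0 < lam j) -> (forall i, ptR x i = \sum_j lam j * ptR (y j) i) ->
  forall j i, i \notin supp x -> y j i = 0%N.
Proof.
move=> lam_gt0 x_eq j i; rewrite inE -eqn0Ngt => /eqP xi0.
have terms_ge0 j' : true -> 0 <= lam j' * ptR (y j') i.
  by move=> _; rewrite mulr_ge0 // ltW.
have sum0 : \sum_j lam j * ptR (y j) i = 0 by rewrite -x_eq /ptR xi0.
have /eqP := psumr_eq0P terms_ge0 sum0 (i := j) isT.
by rewrite mulf_eq0 gt_eqF //= pnatr_eq0 => /eqP.
Qed.

Lemma xi_le_card_supp k : xi_eq (R := R) x k -> (k <= #|supp x|.+1)%N.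
Proof.
case=> -[y [lam [y_part [y_neq [lam_gt0 [lam_sum x_eq]]]]]] k_min.
rewrite leqNgt; apply/negP => lt_supp_k.
have [|u [u_neq0 u_sum u_rep]] :=
  exists_affine_dependence (p := fun j => ptR (R := R) (y j)) _ lt_supp_k.
  by move=> j i /(conv_rep_supp lam_gt0 x_eq j) yji; rewrite /ptR yji.
have [m lt_mk] := conv_rep_shorten y_part y_neq lam_gt0 lam_sum x_eq u_neq0 u_sum u_rep.
exact: k_min.
Qed.

Lemma is_partition_shift (a b : 'I_n -> nat) :
  is_partition x -> (forall i, a i <= x i)%N ->
  (\sum_(i < n) i.+1 * a i = \sum_(i < n) i.+1 * b i)%N ->
  is_partition (fun i => x i - a i + b i)%N.
Proof.
move=> x_part a_le ab_sum; apply: (@addIn (\sum_(i < n) i.+1 * a i)%N).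
rewrite -big_split /= ab_sum -[X in (X + _)%N]x_part -big_split /=.
by apply: eq_bigr => i _; rewrite -!mulnDr; congr (_ * _)%N; have := a_le i; lia.
Qed.

(* x is the midpoint of x - a + b and x - b + a *)
Lemma conv_rep2_shift (a b : 'I_n -> nat) :
  is_partition x -> (forall i, a i <= x i)%N -> (forall i, b i <= x i)%N ->
  (\sum_(i < n) i.+1 * a i = \sum_(i < n) i.+1 * b i)%N -> (exists i, a i != b i) ->
  conv_rep (R := R) 2 x.
Proof.
move=> x_part a_le b_le ab_sum [i0 ab_i0].
pose z (c : bool) i := if c then (x i - a i + b i)%N else (x i - b i + a i)%N.
exists (fun j : 'I_2 => z (j == 0)), (fun=> 2^-1); do !split.
- move=> j; case: (j == 0); apply: is_partition_shift => //.
- move=> j /(congr1 (fun y => y i0)); rewrite /z; have := a_le i0; have := b_le i0.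
  by case: (j == 0); move: ab_i0; lia.
- by move=> _; rewrite invr_gt0 ltr0n.
- by rewrite big_ord_recl big_ord1; field.
- move=> i; rewrite big_ord_recl big_ord1 /= -mulrDr /ptR -natrD.
  have -> : (x i - a i + b i + (x i - b i + a i) = 2 * x i)%N.
    by have := a_le i; have := b_le i; lia.
  by rewrite natrM; field.
Qed.

Definition part_sum (S : {set 'I_n}) : nat := \sum_(i < n) i.+1 * (i \in S).

Lemma indicator_le_supp (S : {set 'I_n}) i :
  S \subset supp x -> (i \in S <= x i)%N.
Proof.
by move=> /subsetP sSx; case: (boolP (i \in S)) => // /sSx; rewrite inE.
Qed.

Lemma part_sum_le (S : {set 'I_n}) :
  is_partition x -> S \subset supp x -> (part_sum S <= n)%N.
Proof.
move=> x_part sSx; rewrite -[leqRHS]x_part.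
by apply: leq_sum => i _; rewrite leq_mul2l indicator_le_supp ?orbT.
Qed.

Lemma part_sum_inj :
  is_partition x -> ~ conv_rep (R := R) 2 x ->
  {in powerset (supp x) &, injective part_sum}.
Proof.
move=> x_part no_midpoint S S'; rewrite !inE => sSx sS'x eq_sum.
apply/eqP/negPn/negP => neqSS'; case: no_midpoint.
apply: (@conv_rep2_shift (fun i => i \in S) (fun i => i \in S')) => //.
- by move=> i; apply: indicator_le_supp.
- by move=> i; apply: indicator_le_supp.
- apply/existsP; apply: contraNT neqSS'; rewrite negb_exists => /forallP eqSS'.
  by apply/eqP/setP => i; move: (eqSS' i); case: (i \in S); case: (i \in S').
Qed.

Lemma exp2_card_supp_le :
  is_partition x -> ~ conv_rep (R := R) 2 x -> (2 ^ #|supp x| <= n.+1)%N.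
Proof.
move=> x_part no_midpoint.
pose g (S : {set 'I_n}) : 'I_n.+1 := inord (part_sum S).
have g_inj : {in powerset (supp x) &, injective g}.
  move=> S S' S_sub S'_sub /(congr1 (@nat_of_ord _)).
  rewrite /g !inordK ?ltnS ?part_sum_le -?powersetE //.
  exact: part_sum_inj.
rewrite -card_powerset -(card_in_imset g_inj).
by rewrite -[leqRHS]card_ord max_card.
Qed.

End ConvexRepresentations.

Lemma natr_le_log2 (R : realType) (m N : nat) :
  (2 ^ m <= N)%N -> (m%:R : R) <= ln N%:R / ln 2.
Proof.
move=> le_2m_N; have ln2_gt0 : 0 < ln (2 : R) by rewrite ln_gt0 // ltr1n.
rewrite ler_pdivlMr // mulr_natl -lnXn // ler_ln ?posrE ?exprn_gt0 //.
  by rewrite -natrX ler_nat.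
by rewrite ltr0n (leq_trans _ le_2m_N) // expn_gt0.
Qed.

Theorem theorem2 (R : realType) (n xi : nat) :
  (0 < n)%N -> (2 < xi)%N ->
  (exists x : 'I_n -> nat, @C_xi R n xi x) ->
  (xi%:R : R) <= ln (n.+1%:R : R) / ln 2 + 1.
Proof.
move=> _ xi_gt2 [x [x_part [_ x_xi]]].
have no_midpoint : ~ conv_rep (R := R) 2 x by apply: x_xi.2.
have xi_gt0 : (0 < xi)%N by apply: ltn_trans xi_gt2.
have xi_le : (xi.-1 <= #|supp x|)%N by rewrite -ltnS prednK ?(xi_le_card_supp x_xi).
have le_2xi : (2 ^ xi.-1 <= n.+1)%N.
  by apply: leq_trans (exp2_card_supp_le x_part no_midpoint); rewrite leq_pexp2l.
by rewrite -[xi]prednK // -addn1 natrD lerD2r natr_le_log2.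
Qed.
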